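(* (1) $E^{\partial}_{FTP}$ is sound for bisimilarity on $T(\Sigma^{\partial}_{FTP})$, i.e. whenever $E^{\partial}_{FTP}\vdash s=t$ for closed $s,t\in T(\Sigma^{\partial}_{FTP})$ then $s\sim t$. (2) For every $t\in T(\Sigma^{\partial}_{FTP})$ there exists $t'\in T(\Sigma_{FTP})$ such that $E^{\partial}_{FTP}\vdash t=t'$.
   Context: Fix a finite nonempty set $\mathcal A$ of actions, a finite set $\mathcal P$ of predicates, a subset $\mathcal P^I\subseteq\mathcal P$ of implicit predicates, and for each $P\in\mathcal P^I$ a set $\mathcal A_P\subseteq\mathcal A$. $\Sigma_{FTP}$ consists of $\delta$, constants $\kappa_P$ ($P\in\mathcal P$), prefixes $a.\_$ ($a\in\mathcal A$), and binary $+$. $\Sigma^\partial_{FTP}$ extends it with a unary operation $\partial_{\mathcal B,\mathcal Q}$ for every $\mathcal B\subseteq\mathcal A$, $\mathcal Q\subseteq\mathcal P$. Semantics on closed terms: the least relations closed under: $a.x\xrightarrow{a}x$; $x\xrightarrow{a}x'\Rightarrow x+y\xrightarrow{a}x'$; $y\xrightarrow{a}y'\Rightarrow x+y\xrightarrow{a}y'$; $P\kappa_P$; $Px\Rightarrow P(x+y)$; $Py\Rightarrow P(x+y)$; $Px\Rightarrow P(a.x)$ for $P\in\mathcal P^I$, $a\in\mathcal A_P$; $x\xrightarrow{a}x'\Rightarrow \partial_{\mathcal B,\mathcal Q}(x)\xrightarrow{a}\partial_{\emptyset,\mathcal Q\cap\mathcal P^I}(x')$ if $a\notin\mathcal B$;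 $Px\Rightarrow P(\partial_{\mathcal B,\mathcal Q}(x))$ if $P\notin\mathcal Q$. Bisimulation: symmetric $R$ such that $(s,t)\in R$ and $s\xrightarrow{a}s'$ imply $t\xrightarrow{a}t'$ with $(s',t')\in R$, and $Ps$ implies $Pt$; $\sim$ is the union of all bisimulations. $E_{FTP}$: $x+y=y+x$, $(x+y)+z=x+(y+z)$, $x+x=x$, $x+\delta=x$, $a.(x+\kappa_P)=a.(x+\kappa_P)+\kappa_P$ ($P\in\mathcal P^I$, $a\in\mathcal A_P$). $E^\partial_{FTP}$ is $E_{FTP}$ plus, for all $\mathcal B,\mathcal Q$: $\partial_{\mathcal B,\mathcal Q}(\delta)=\delta$; $\partial_{\mathcal B,\mathcal Q}(\kappa_P)=\delta$ if $P\in\mathcal Q$; $\partial_{\mathcal B,\mathcal Q}(\kappa_P)=\kappa_P$ if $P\notin\mathcal Q$; $\partial_{\mathcal B,\mathcal Q}(a.x)=\sum_{P\notin\mathcal Q,\,P(a.x)}\kappa_P$ if $a\in\mathcal B$ (a schema: for each closed instance of $x$, the sum ranges over the predicates $P\notin\mathcal Q$ satisfied by $a.x$); $\partial_{\mathcal B,\mathcal Q}(a.x)=\partial_{\emptyset,\mathcal Q}(a.x)$ if $a\notin\mathcal B$; $\partial_{\emptyset,\mathcal Q}(a.x)=a.\partial_{\emptyset,\mathcal Q\cap\mathcal P^I}(x)$; $\partial_{\mathcal B,\mathcal Q}(x+y)=\partial_{\mathcal B,\mathcal Q}(x)+\partial_{\mathcal B,\mathcal Q}(y)$. $\vdash$ denotes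 derivability in equational logic. *)

From mathcomp Require Import all_boot.
Set Implicit Arguments. Unset Strict Implicit. Unset Printing Implicit Defensive.

(* Closed terms over Sigma^partial_FTP.  Terms over Sigma_FTP are those
   without the encapsulation operator (predicate [is_ftp]). *)
Section Terms.
Variables (A Pr : finType).

Inductive term : Type :=
| TDelta : term
| TKappa : Pr -> term
| TPre   : A -> term -> term
| TPlus  : term -> term -> term
| TEnc   : {set A} -> {set Pr} -> term -> term.

Fixpoint is_ftp (t : term) : bool :=
  match t with
  | TDelta => true
  | TKappa _ => true
  | TPre _ x => is_ftp x
  | TPlus x y => is_ftp x && is_ftp y
  | TEnc _ _ _ => false
  end.

Fixpoint sumk (l : seq Pr) : term :=
  match l with
  | [::] => TDelta
  | [:: p] => TKappa p
  | p :: l' => TPlus (TKappa p) (sumk l')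
  end.
End Terms.
Arguments TDelta {A Pr}.
Arguments TKappa {A Pr} _.
Arguments TPre {A Pr} _ _.
Arguments TPlus {A Pr} _ _.
Arguments TEnc {A Pr} _ _ _.
Arguments sumk {A Pr} _.


Section Semantics.

Variables (A Pr : finType) (PI : {set Pr}) (AP : Pr -> {set A}).
(* PI = implicit predicates; AP P = the set A_P (only relevant for P in PI) *)

Inductive step : term A Pr -> A -> term A Pr -> Prop :=
| st_pre a x : step (TPre a x) a x
| st_plusl x y a x' : step x a x' -> step (TPlus x y) a x'
| st_plusr x y a y' : step y a y' -> step (TPlus x y) a y'
| st_enc (B : {set A}) (Q : {set Pr}) x a x' : a \notin B -> step x a x' ->
    step (TEnc B Q x) a (TEnc set0 (Q :&: PI) x').

Inductive holds : Pr -> term A Pr -> Prop :=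
| h_kappa P : holds P (TKappa P)
| h_plusl P x y : holds P x -> holds P (TPlus x y)
| h_plusr P x y : holds P y -> holds P (TPlus x y)
| h_pre P a x : P \in PI -> a \in AP P -> holds P x -> holds P (TPre a x)
| h_enc P (B : {set A}) (Q : {set Pr}) x : P \notin Q -> holds P x -> holds P (TEnc B Q x).

Definition bisimulation (R : term A Pr -> term A Pr -> Prop) : Prop :=
  (forall s t, R s t -> R t s) /\
  (forall s t a s', R s t -> step s a s' -> exists t', step t a t' /\ R s' t') /\
  (forall s t P, R s t -> holds P s -> holds P t).

Definition bisimilar (s t : term A Pr) : Prop :=
  exists R, bisimulation R /\ R s t.

(* closed instances of the axioms of E^partial_FTP *)
Inductive axiom : term A Pr -> term A Pr -> Prop :=
| ax_comm x y : axiom (TPlus x y) (TPlus y x)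
| ax_assoc x y z : axiom (TPlus (TPlus x y) z) (TPlus x (TPlus y z))
| ax_idem x : axiom (TPlus x x) x
| ax_delta x : axiom (TPlus x TDelta) x
| ax_impl P a x : P \in PI -> a \in AP P ->
    axiom (TPre a (TPlus x (TKappa P)))
          (TPlus (TPre a (TPlus x (TKappa P))) (TKappa P))
| ax_enc_delta (B : {set A}) (Q : {set Pr}) : axiom (TEnc B Q TDelta) TDelta
| ax_enc_kappa_in (B : {set A}) (Q : {set Pr}) P : P \in Q -> axiom (TEnc B Q (TKappa P)) TDelta
| ax_enc_kappa_out (B : {set A}) (Q : {set Pr}) P : P \notin Q -> axiom (TEnc B Q (TKappa P)) (TKappa P)
| ax_enc_block (B : {set A}) (Q : {set Pr}) a x (l : seq Pr) : a \in B -> uniq l ->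
    (forall P, P \in l <-> (P \notin Q /\ holds P (TPre a x))) ->
    axiom (TEnc B Q (TPre a x)) (sumk l)
| ax_enc_pass (B : {set A}) (Q : {set Pr}) a x : a \notin B ->
    axiom (TEnc B Q (TPre a x)) (TEnc set0 Q (TPre a x))
| ax_enc_pre (Q : {set Pr}) a x :
    axiom (TEnc set0 Q (TPre a x)) (TPre a (TEnc set0 (Q :&: PI) x))
| ax_enc_plus (B : {set A}) (Q : {set Pr}) x y :
    axiom (TEnc B Q (TPlus x y)) (TPlus (TEnc B Q x) (TEnc B Q y)).

Inductive derivable : term A Pr -> term A Pr -> Prop :=
| d_ax s t : axiom s t -> derivable s t
| d_refl t : derivable t t
| d_sym s t : derivable s t -> derivable t s
| d_trans s t u : derivable s t -> derivable t u -> derivable s u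
| d_pre a s t : derivable s t -> derivable (TPre a s) (TPre a t)
| d_plus s s' t t' : derivable s s' -> derivable t t' ->
    derivable (TPlus s t) (TPlus s' t')
| d_enc (B : {set A}) (Q : {set Pr}) s t : derivable s t -> derivable (TEnc B Q s) (TEnc B Q t).
End Semantics.

From Stdlib Require Import ClassicalEpsilon.
From Pilot Require Import Defs.
From mathcomp Require Import all_boot.
Set Implicit Arguments. Unset Strict Implicit.

(* Soundness: bisimilarity is a congruence for all operators (via bisimulation
   up to bisimilarity), and each closed axiom instance relates two terms with
   literally the same transitions and predicates.  Elimination: encapsulation
   is pushed through sums and prefixes of a term that is already free of
   encapsulation, until it meets delta, a constant, or a blocked prefix, where
   the axioms remove it; an inner-first induction then clears every term. *)

Lemma exists_uniq_seq_of_pred (T : finType) (p : T -> Prop) :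
  exists l : seq T, uniq l /\ forall x, x \in l <-> p x.
Proof.
pose pb x : bool := excluded_middle_informative (p x).
exists [seq x <- enum T | pb x]; split; first by rewrite filter_uniq ?enum_uniq.
move=> x; rewrite mem_filter mem_enum andbT /pb.
by case: excluded_middle_informative.
Qed.

Section Bisimilarity.
Variables (A Pr : finType) (PI : {set Pr}) (AP : Pr -> {set A}).

Notation bis := (bisimilar PI AP).
Notation step := (step PI).
Notation holds := (holds PI AP).

Lemma bisimilar_refl s : bis s s.
Proof.
exists eq; split=> //; split; first by move=> ? ? ->.
by split=> [u _ a u' <- Hs | u _ P <-] //; exists u'.
Qed.

Lemma bisimilar_sym s t : bis s t -> bis t s.
Proof. by case=> R [[Rsym Rbisim] Rst]; exists R; split; [split | apply: Rsym]. Qed.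

Lemma bisimilar_step s t a s' :
  bis s t -> step s a s' -> exists t', step t a t' /\ bis s' t'.
Proof.
case=> R [[Rsym [Rstep Rholds]] Rst] /(Rstep _ _ _ _ Rst) [t' [Ht Rst']].
by exists t'; split=> //; exists R.
Qed.

Lemma bisimilar_holds s t P : bis s t -> holds P s -> holds P t.
Proof. by case=> R [[_ [_ Rholds]] /Rholds]; apply. Qed.

Lemma bisimilar_trans s t u : bis s t -> bis t u -> bis s u.
Proof.
move=> Hst Htu; exists (fun x z => exists2 y, bis x y & bis y z).
split; last by exists t.
split; first by move=> x z [y Hxy Hyz]; exists y; apply: bisimilar_sym.
split=> [x z a x' [y Hxy Hyz] Hx | x z P [y Hxy Hyz] Hx].
- have [y' [Hy Hxy']] := bisimilar_step Hxy Hx.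
  have [z' [Hz Hyz']] := bisimilar_step Hyz Hy.
  by exists z'; split=> //; exists y'.
- exact: bisimilar_holds Hyz (bisimilar_holds Hxy Hx).
Qed.

Lemma bisimilar_upto (R : term A Pr -> term A Pr -> Prop) :
  (forall s t, R s t -> R t s) ->
  (forall s t a s', R s t -> step s a s' ->
     exists t', step t a t' /\ (R s' t' \/ bis s' t')) ->
  (forall s t P, R s t -> holds P s -> holds P t) ->
  forall s t, R s t -> bis s t.
Proof.
move=> Rsym Rstep Rholds s t Rst; exists (fun x y => R x y \/ bis x y).
split; last by left.
split; first by move=> x y [H|H]; [left; apply: Rsym | right; apply: bisimilar_sym].
split=> [x y a x' [H|H] Hx | x y P [H|H] Hx].
- exact: Rstep H Hx.
- by have [y' [Hy Hxy']] := bisimilar_step H Hx; exists y'; split=> //; right.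
- exact: Rholds H Hx.
- exact: bisimilar_holds H Hx.
Qed.

Lemma bisimilar_of_same_behaviour s t :
  (forall a u, step s a u <-> step t a u) ->
  (forall P, holds P s <-> holds P t) -> bis s t.
Proof.
move=> Hstep Hholds.
pose R s t := (forall a u, step s a u <-> step t a u) /\
              (forall P, holds P s <-> holds P t).
apply: (@bisimilar_upto R); last by split.
- by move=> x y [Hs Hh]; split=> *; [rewrite Hs | rewrite Hh].
- move=> x y a x' [Hs _] /Hs Hy; exists x'.
  by split=> //; right; apply: bisimilar_refl.
- by move=> x y P [_ Hh] /Hh.
Qed.

Lemma bisimilar_plus x x' y y' :
  bis x x' -> bis y y' -> bis (TPlus x y) (TPlus x' y').
Proof.
pose R s t := exists x x' y y',
  [/\ s = TPlus x y, t = TPlus x' y', bis x x' & bis y y'].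
move=> Hx Hy; apply: (@bisimilar_upto R); last by exists x, x', y, y'.
- move=> _ _ [u [u' [v [v' [-> -> Hu Hv]]]]].
  by exists u', u, v', v; split=> //; apply: bisimilar_sym.
- move=> _ _ a s' [u [u' [v [v' [-> -> Hu Hv]]]]] Hs; inversion Hs; subst.
  + have [t' [Ht Hst']] := bisimilar_step Hu ltac:(eassumption).
    by exists t'; split; [apply: st_plusl | right].
  + have [t' [Ht Hst']] := bisimilar_step Hv ltac:(eassumption).
    by exists t'; split; [apply: st_plusr | right].
- move=> _ _ P [u [u' [v [v' [-> -> Hu Hv]]]]] Hs; inversion Hs; subst.
  + by apply: h_plusl; apply: bisimilar_holds Hu _.
  + by apply: h_plusr; apply: bisimilar_holds Hv _.
Qed.

Lemma bisimilar_pre a x y : bis x y -> bis (TPre a x) (TPre a y).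
Proof.
pose R s t := exists a x y, [/\ s = TPre a x, t = TPre a y & bis x y].
move=> Hxy; apply: (@bisimilar_upto R); last by exists a, x, y.
- move=> _ _ [b [u [v [-> -> Huv]]]].
  by exists b, v, u; split=> //; apply: bisimilar_sym.
- move=> _ _ b s' [c [u [v [-> -> Huv]]]] Hs; inversion Hs; subst.
  by exists v; split; [apply: st_pre | right].
- move=> _ _ P [c [u [v [-> -> Huv]]]] Hs; inversion Hs; subst.
  by apply: h_pre => //; apply: bisimilar_holds Huv _.
Qed.

Lemma bisimilar_enc B Q x y : bis x y -> bis (TEnc B Q x) (TEnc B Q y).
Proof.
pose R s t := exists B Q x y,
  [/\ s = TEnc B Q x, t = TEnc B Q y & bis x y].
move=> Hxy; apply: (@bisimilar_upto R); last by exists B, Q, x, y.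
- move=> _ _ [B' [Q' [u [v [-> -> Huv]]]]].
  by exists B', Q', v, u; split=> //; apply: bisimilar_sym.
- move=> _ _ b s' [B' [Q' [u [v [-> -> Huv]]]]] Hs; inversion Hs; subst.
  have [v' [Hv Huv']] := bisimilar_step Huv ltac:(eassumption).
  exists (TEnc set0 (Q' :&: PI) v'); split; first exact: st_enc.
  by left; exists set0, (Q' :&: PI), x', v'.
- move=> _ _ P [B' [Q' [u [v [-> -> Huv]]]]] Hs; inversion Hs; subst.
  by apply: h_enc => //; apply: bisimilar_holds Huv _.
Qed.

Lemma sumk_nostep (l : seq Pr) a u : ~ step (@sumk A Pr l) a u.
Proof.
elim: l => [|p [|q l] IH] /= Hs; inversion Hs; subst => //.
by match goal with H : @Defs.step _ _ _ (TKappa _) _ _ |- _ => inversion H end.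
Qed.

Lemma holds_sumk (l : seq Pr) P : holds P (@sumk A Pr l) <-> P \in l.
Proof.
elim: l => [|p [|q l] IH] /=; first by split=> // H; inversion H.
- by rewrite inE; split=> [H | /eqP->]; [inversion H | apply: h_kappa].
rewrite inE; split=> [H | /orP[/eqP-> | /IH H]].
- inversion H; subst; last by apply/orP; right; apply/IH.
  by match goal with H : @Defs.holds _ _ _ _ _ (TKappa _) |- _ =>
       inversion H; rewrite eqxx end.
- exact/h_plusl/h_kappa.
- exact: h_plusr.
Qed.

Ltac invert_behaviour := repeat match goal with
 | H : @Defs.step _ _ _ ?t _ _ |- _ => (is_var t; fail 1) || (inversion H; subst; clear H)
 | H : @Defs.holds _ _ _ _ _ ?t |- _ => (is_var t; fail 1) || (inversion H; subst; clear H)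
 end.

Ltac absurd_mem := match goal with
 | H : is_true (?x \in ?S), H' : is_true (?x \notin ?S) |- _ => by rewrite H in H'
 end.

Lemma bisimilar_enc_block (B : {set A}) (Q : {set Pr}) a x (l : seq Pr) :
  a \in B ->
  (forall P, P \in l <-> P \notin Q /\ holds P (TPre a x)) ->
  bis (TEnc B Q (TPre a x)) (sumk l).
Proof.
move=> Ha Hmem; apply: bisimilar_of_same_behaviour => [b u|P]; split=> H.
- by invert_behaviour; absurd_mem.
- by case: (sumk_nostep H).
- by apply/holds_sumk/Hmem; invert_behaviour; split=> //; apply: h_pre.
- by move/holds_sumk/Hmem: H => [HP HaP]; apply: h_enc.
Qed.

Lemma bisimilar_axiom s t : axiom PI AP s t -> bis s t.
Proof.
case=> {s t} [||||||||B Q a x l Ha _ Hmem|||]; last 4 first.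
  exact: bisimilar_enc_block Ha Hmem.
all: intros; apply: bisimilar_of_same_behaviour => [b u|P']; split=> H;
  invert_behaviour; rewrite ?inE //;
  eauto 6 using st_pre, st_plusl, st_plusr, st_enc,
                h_kappa, h_plusl, h_plusr, h_pre, h_enc.
all: try absurd_mem.
- by apply: st_enc; [rewrite inE | apply: st_pre].
- by apply: st_enc; [rewrite inE | apply: st_pre].
- by apply: h_pre => //; apply: h_enc; rewrite // in_setI negb_and; apply/orP; left.
- apply: h_enc; last exact: h_pre.
  match goal with HQI : context [Q :&: PI] |- _ =>
    by move: HQI; rewrite in_setI; apply: contraNN => ->; apply/andP end.
Qed.

Lemma bisimilar_derivable s t : derivable PI AP s t -> bis s t.
Proof.
elim=> {s t} [s t /bisimilar_axiom | t | s t _ /bisimilar_sym | s t u _ Hst _ Htu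
             | a s t _ /bisimilar_pre | s s' t t' _ Hs _ Ht | B Q s t _ /bisimilar_enc] //.
- exact: bisimilar_refl.
- exact: bisimilar_trans Hst Htu.
- exact: bisimilar_plus.
Qed.

Lemma is_ftp_sumk (l : seq Pr) : is_ftp (@sumk A Pr l).
Proof. by elim: l => [|p [|q l] IH]. Qed.

Lemma derivable_enc_ftp x : is_ftp x -> forall B Q,
  exists2 t, is_ftp t & derivable PI AP (TEnc B Q x) t.
Proof.
elim: x => [|P|a x IH|x IHx y IHy|] //= Hx B Q.
- by exists TDelta; last exact/d_ax/ax_enc_delta.
- case: (boolP (P \in Q)) => HP.
  + by exists TDelta; last exact/d_ax/ax_enc_kappa_in.
  + by exists (TKappa P); last exact/d_ax/ax_enc_kappa_out.
- case: (boolP (a \in B)) => Ha.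
  + have [l [Hl Hmem]] :=
      exists_uniq_seq_of_pred (fun P => P \notin Q /\ holds P (TPre a x)).
    by exists (sumk l); [apply: is_ftp_sumk | apply/d_ax/ax_enc_block].
  + have [x' Hx' Hdx] := IH Hx set0 (Q :&: PI).
    exists (TPre a x') => //.
    apply: d_trans; first exact/d_ax/ax_enc_pass.
    by apply: d_trans (d_pre _ Hdx); apply/d_ax/ax_enc_pre.
- case/andP: Hx => Hx Hy.
  have [x' Hx' Hdx] := IHx Hx B Q; have [y' Hy' Hdy] := IHy Hy B Q.
  exists (TPlus x' y'); first by rewrite /= Hx' Hy'.
  by apply: d_trans (d_plus Hdx Hdy); apply/d_ax/ax_enc_plus.
Qed.

Lemma derivable_ftp t : exists2 t', is_ftp t' & derivable PI AP t t'.
Proof.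
elim: t => [|P|a x [x' Hx' Hdx]|x [x' Hx' Hdx] y [y' Hy' Hdy]|B Q x [x' Hx' Hdx]].
- by exists TDelta; last exact: d_refl.
- by exists (TKappa P); last exact: d_refl.
- by exists (TPre a x'); last exact: d_pre.
- by exists (TPlus x' y'); [rewrite /= Hx' Hy' | apply: d_plus].
- have [t Ht Hdt] := derivable_enc_ftp Hx' B Q.
  by exists t; last exact: d_trans (d_enc B Q Hdx) Hdt.
Qed.

End Bisimilarity.

Theorem theorem2 (A Pr : finType) (PI : {set Pr}) (AP : Pr -> {set A})
    (hA : 0 < #|A|) :
  (forall s t : term A Pr, derivable PI AP s t -> bisimilar PI AP s t) /\
  (forall t : term A Pr, exists t' : term A Pr, is_ftp t' /\ derivable PI AP t t').
Proof.
split; first exact: bisimilar_derivable.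
by move=> t; have [t' Ht' Hdt] := derivable_ftp PI AP t; exists t'.
Qed.
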